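(* Consider the graded cluster algebra $\mathcal{A}\big((x_1,x_2,x_3),B,(1,1,2)\big)$ with $B=\begin{pmatrix}0&2&-1\\-2&0&1\\1&-1&0\end{pmatrix}$. It has infinitely many distinct cluster variables of degree $1$ and infinitely many distinct cluster variables of degree $-1$.
   Context: Graded cluster algebras: for a $3\times3$ skew-symmetric integer matrix $B=(b_{ij})$ and $k\in\{1,2,3\}$, $\mu_k(B)=(b'_{ij})$ with $b'_{ij}=-b_{ij}$ if $i=k$ or $j=k$ and $b'_{ij}=b_{ij}+\operatorname{sgn}(b_{ik})\max(b_{ik}b_{kj},0)$ otherwise. A seed $((x_1,x_2,x_3),B)$ mutates in direction $k$ to $(x',\mu_k B)$ with $x'_j=x_j$ ($j\ne k$) and $x'_k=\big(\prod_{b_{ik}>0}x_i^{b_{ik}}+\prod_{b_{ik}<0}x_i^{-b_{ik}}\big)/x_k$. Cluster variables are all entries of clusters reachable by iterated mutation; $\mathcal{A}(x,B,g)$ is the algebra they generate, graded by $\deg x_i=g_i$ where $Bg=0$; under mutation at $k$ the degree vector becomes $g'$ with $g'_j=g_j$ ($j\neq k$), $g'_k=-g_k+\sum_{b_{ik}>0}b_{ik}g_i$, and every cluster variable is homogeneous. *)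

From HB Require Import structures.
From mathcomp Require Import all_boot all_order all_algebra.
From mathcomp Require Import fraction.
From mathcomp Require Import mpoly.
Set Implicit Arguments. Unset Strict Implicit. Unset Printing Implicit Defensive.
Import Order.TTheory GRing.Theory Num.Theory.
Local Open Scope ring_scope.

Definition Kfield := {fraction {mpoly rat[3]}}.

Definition xinit (i : 'I_3) : Kfield := tofrac ('X_i : {mpoly rat[3]}).

Definition mut_mat (k : 'I_3) (B : 'M[int]_3) : 'M[int]_3 :=
  \matrix_(i, j)
    if (i == k) || (j == k) then - B i j
    else B i j + Num.sg (B i k) * Num.max (B i k * B k j) 0.

Record gseed := GSeed {
  gs_x : 'I_3 -> Kfield;
  gs_B : 'M[int]_3;
  gs_g : 'I_3 -> int }.

Definition mut_seed (k : 'I_3) (s : gseed) : gseed :=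
  let x := gs_x s in let B := gs_B s in let g := gs_g s in
  GSeed
    (fun j => if j == k then
       ((\prod_(i < 3 | 0 < B i k) x i ^+ `|B i k|%N)
        + (\prod_(i < 3 | B i k < 0) x i ^+ `|B i k|%N)) / x k
     else x j)
    (mut_mat k B)
    (fun j => if j == k then
       - g k + \sum_(i < 3 | 0 < B i k) B i k * g i
     else g j).

Definition mut_seq (ks : seq 'I_3) (s : gseed) : gseed :=
  foldl (fun t k => mut_seed k t) s ks.

Definition cluster_var_of_degree (s : gseed) (v : Kfield) (d : int) : Prop :=
  exists (ks : seq 'I_3) (k : 'I_3),
    gs_x (mut_seq ks s) k = v /\ gs_g (mut_seq ks s) k = d.

Definition B0 : 'M[int]_3 :=
  \matrix_(i, j)
    nth (0 : int) (nth [::] [:: [:: 0; 2; -1]; [:: -2; 0; 1]; [:: 1; -1; 0]] i) j.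

Definition g0 (i : 'I_3) : int := nth (0 : int) [:: 1; 1; 2] i.

Definition seed0 : gseed := GSeed xinit B0 g0.

From HB Require Import structures.
From mathcomp Require Import all_boot all_order all_algebra.
From mathcomp Require Import fraction mpoly ring lra.
Set Implicit Arguments. Unset Strict Implicit. Unset Printing Implicit Defensive.
Import Order.TTheory GRing.Theory Num.Theory.
Local Open Scope ring_scope.

(* Evaluating at x = (1,1,1) sends every cluster variable to a positive
   rational, since the exchange relations are subtraction-free, and equal
   cluster variables have equal values.  Mutating B alternately at 1 and 2
   returns to B with degrees (1,1,2) and leaves x3 = 1 alone, so along this
   orbit the values (a, b) of (x1, x2) follow the rank-2 recurrence
   a' = (1 + b^2) / a, b' = (1 + a'^2) / b, which increases strictly from
   (1, 1); this gives infinitely many distinct cluster variables x1 of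
   degree 1.  After the mutations 3,1,2,1,3 the degrees are (-1,-2,-1), and
   mutating alternately at 1 and 3 leaves x2 = 5 alone, which gives the same
   recurrence with 5 in place of 1 and cluster variables x1 of degree -1. *)

Section Specialization.
Variables (n : nat) (R : fieldType) (a : 'I_n -> R).
Local Notation K := {fraction {mpoly R[n]}}.

Definition specializes (v : K) (r : R) : Prop :=
  exists p q : {mpoly R[n]},
    [/\ q.@[a] != 0, v = tofrac p / tofrac q & r = p.@[a] / q.@[a]].

Lemma tofrac_neq0 (q : {mpoly R[n]}) : q.@[a] != 0 -> tofrac q != 0 :> K.
Proof. by move=> q_a; rewrite tofrac_eq0; apply: contra q_a => /eqP ->; rewrite meval0. Qed.

Lemma specializes1 : specializes 1 1.
Proof. by exists 1, 1; rewrite meval1 tofrac1 !divr1 oner_eq0. Qed.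

Lemma specializesX i : specializes (tofrac 'X_i) (a i).
Proof. by exists 'X_i, 1; rewrite meval1 tofrac1 !divr1 mevalXU oner_eq0. Qed.

Lemma specializesM u w r s :
  specializes u r -> specializes w s -> specializes (u * w) (r * s).
Proof.
move=> [p [q [q_a -> ->]]] [p' [q' [q'_a -> ->]]].
exists (p * p'), (q * q'); rewrite !mevalM !tofracM mulf_neq0 //.
by split; rewrite // invfM mulrACA.
Qed.

Lemma specializesD u w r s :
  specializes u r -> specializes w s -> specializes (u + w) (r + s).
Proof.
move=> [p [q [q_a -> ->]]] [p' [q' [q'_a -> ->]]].
exists (p * q' + p' * q), (q * q').
rewrite !mevalD !mevalM !tofracD !tofracM mulf_neq0 //.
by split; rewrite // addf_div // tofrac_neq0.
Qed.

Lemma specializesV u r : specializes u r -> r != 0 -> specializes u^-1 r^-1.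
Proof.
move=> [p [q [q_a -> ->]]] r_neq0.
have p_a : p.@[a] != 0 by apply: contra r_neq0 => /eqP ->; rewrite mul0r.
by exists q, p; rewrite !invf_div.
Qed.

Lemma specializes_prod (I : finType) (P : pred I) (u : I -> K) (r : I -> R) :
  (forall i, P i -> specializes (u i) (r i)) ->
  specializes (\prod_(i | P i) u i) (\prod_(i | P i) r i).
Proof.
move=> ur; apply: (big_ind2 specializes) => //; first exact: specializes1.
by move=> u1 r1 u2 r2; apply: specializesM.
Qed.

Lemma specializesXn u r m : specializes u r -> specializes (u ^+ m) (r ^+ m).
Proof.
move=> ur; elim: m => [|m IH]; first by rewrite !expr0; exact: specializes1.
by rewrite !exprS; apply: specializesM.
Qed.

Lemma specializes_fun v r s : specializes v r -> specializes v s -> r = s.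
Proof.
move=> [p [q [q_a -> ->]]] [p' [q' [q'_a e ->]]].
have : tofrac (p * q') = tofrac (p' * q) :> K.
  by rewrite !tofracM; apply/eqP; rewrite -eqr_div ?tofrac_neq0 // e.
move/eqP; rewrite tofrac_eq => /eqP /(congr1 (meval a)); rewrite !mevalM => e'.
by apply/eqP; rewrite eqr_div // e'.
Qed.

Lemma specializes_inj (I : Type) (f : I -> K) (r : I -> R) :
  (forall i, specializes (f i) (r i)) -> injective r -> injective f.
Proof. by move=> fr r_inj i j fij; apply: r_inj; apply: specializes_fun (fr i) _; rewrite fij. Qed.

End Specialization.

Definition vec3 (T : Type) (x y z : T) : 'I_3 -> T := tnth [tuple x; y; z].

Definition mx3 (l : seq (seq int)) : 'M[int]_3 := \matrix_(i, j) nth 0 (nth [::] l i) j.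

Definition i0 : 'I_3 := @Ordinal 3 0 isT.
Definition i1 : 'I_3 := @Ordinal 3 1 isT.
Definition i2 : 'I_3 := @Ordinal 3 2 isT.

Lemma big3 (T : Type) (idx : T) (op : Monoid.law idx) (P : pred 'I_3) (F : 'I_3 -> T) :
  \big[op/idx]_(i < 3 | P i) F i =
  op (op (if P i0 then F i0 else idx) (if P i1 then F i1 else idx))
     (if P i2 then F i2 else idx).
Proof.
rewrite big_mkcond !big_ord_recl big_ord0 Monoid.mulm1 Monoid.mulmA.
by congr (op (op _ _) _); congr (if P _ then F _ else _); apply: val_inj.
Qed.

Definition mut_deg (k : 'I_3) (B : 'M[int]_3) (g : 'I_3 -> int) : 'I_3 -> int :=
  fun j => if j == k then - g k + \sum_(i < 3 | 0 < B i k) B i k * g i else g j.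

Definition mut_values (k : 'I_3) (B : 'M[int]_3) (r : 'I_3 -> rat) : 'I_3 -> rat :=
  fun j => if j == k then
      (\prod_(i < 3 | 0 < B i k) r i ^+ `|B i k|%N
       + \prod_(i < 3 | B i k < 0) r i ^+ `|B i k|%N) / r k
    else r j.

Record shadow := Shadow {
  sh_B : 'M[int]_3;
  sh_g : 'I_3 -> int;
  sh_r : 'I_3 -> rat }.

Definition shadow_mut (k : 'I_3) (t : shadow) : shadow :=
  Shadow (mut_mat k (sh_B t)) (mut_deg k (sh_B t) (sh_g t)) (mut_values k (sh_B t) (sh_r t)).

Definition shadow_seq (ks : seq 'I_3) (t : shadow) : shadow :=
  foldl (fun t k => shadow_mut k t) t ks.

Definition shadow_equiv (t t' : shadow) : Prop :=
  [/\ sh_B t = sh_B t', sh_g t =1 sh_g t' & sh_r t =1 sh_r t'].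

(* Positivity of the values makes every exchange relation divide by a
   nonzero number, so values can be followed mutation by mutation. *)
Definition shadows (s : gseed) (t : shadow) : Prop :=
  [/\ gs_B s = sh_B t, gs_g s =1 sh_g t &
      forall i, specializes (fun=> 1) (gs_x s i) (sh_r t i) /\ 0 < sh_r t i].

Lemma shadows_equiv s t t' : shadows s t -> shadow_equiv t t' -> shadows s t'.
Proof. by move=> [sB sg sx] [tB tg tr]; split=> [|i|i]; rewrite -?tB -?tg -?tr. Qed.

Lemma shadows_mut k s t : shadows s t -> shadows (mut_seed k s) (shadow_mut k t).
Proof.
move=> [sB sg sx]; split=> [|j|j] /=; first by rewrite sB.
  rewrite /mut_deg -sB; case: eqP => _; last exact: sg.
  by rewrite sg; congr (_ + _); apply: eq_bigr => i _; rewrite sg.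
rewrite /mut_values -sB; case: eqP => _; last exact: sx.
have monomial (P : pred 'I_3) (e : 'I_3 -> nat) :
    specializes (fun=> 1) (\prod_(i < 3 | P i) gs_x s i ^+ e i)
      (\prod_(i < 3 | P i) sh_r t i ^+ e i) /\ 0 < \prod_(i < 3 | P i) sh_r t i ^+ e i.
  split; first by apply: specializes_prod => i _; apply/specializesXn/(sx i).1.
  by apply: prodr_gt0 => i _; apply/exprn_gt0/(sx i).2.
have [x_pos r_pos] := monomial (fun i => 0 < gs_B s i k) (fun i => `|gs_B s i k|%N).
have [x_neg r_neg] := monomial (fun i => gs_B s i k < 0) (fun i => `|gs_B s i k|%N).
have [x_k r_k] := sx k.
split; last by apply: divr_gt0 => //; apply: addr_gt0.
by apply: specializesM; [exact: specializesD | apply: specializesV; rewrite // gt_eqF].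
Qed.

Lemma shadows_mut_seq ks s t : shadows s t -> shadows (mut_seq ks s) (shadow_seq ks t).
Proof. by elim: ks s t => // k ks IH s t st; apply/IH/shadows_mut. Qed.

Lemma mut_seq_cat ks ks' s : mut_seq (ks ++ ks') s = mut_seq ks' (mut_seq ks s).
Proof. exact: foldl_cat. Qed.

Lemma shadows_periodic (T : Type) (mk : T -> shadow) (f : T -> T) ks :
  (forall p, shadow_equiv (shadow_seq ks (mk p)) (mk (f p))) ->
  forall m s p, shadows s (mk p) ->
  shadows (mut_seq (flatten (nseq m ks)) s) (mk (iter m f p)).
Proof.
move=> period; elim=> // m IH s p sp.
rewrite [flatten _]/= mut_seq_cat iterSr; apply: IH.
exact: shadows_equiv (shadows_mut_seq ks sp) (period p).
Qed.

Section ExchangeRecurrence.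
Variables (R : realFieldType) (c : R).

Definition exchange_step (p : R * R) : R * R :=
  let a := (c + p.2 ^+ 2) / p.1 in (a, (c + a ^+ 2) / p.2).

Lemma exchange_step_increasing (a b : R) : 0 < c -> 0 < a <= b ->
  let q := exchange_step (a, b) in 0 < q.1 <= q.2 /\ b < q.1.
Proof.
move=> c_gt0 /andP [a_gt0 le_ab] /=.
have b_gt0 : 0 < b by apply: lt_le_trans le_ab.
have lt_ba' : b < (c + b ^+ 2) / a by rewrite ltr_pdivlMr //; nra.
set a' := (c + b ^+ 2) / a in lt_ba' *.
split=> //; apply/andP; split; first exact: lt_trans lt_ba'.
by rewrite ler_pdivlMr //; nra.
Qed.

Lemma exchange_iter_inj p : 0 < c -> 0 < p.1 <= p.2 ->
  injective (fun m => (iter m exchange_step p).1).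
Proof.
move=> c_gt0 p_ok.
have inv m : 0 < (iter m exchange_step p).1 <= (iter m exchange_step p).2.
  elim: m => // m; rewrite iterS; case: (iter m _ p) => a b ab.
  by case: (exchange_step_increasing c_gt0 ab).
have incr m : (iter m exchange_step p).1 < (iter m.+1 exchange_step p).1.
  move: (inv m); rewrite iterS; case: (iter m _ p) => a b /= /[dup] /andP [_ le_ab] ab.
  by have [_ lt_ba'] := exchange_step_increasing c_gt0 ab; apply: le_lt_trans lt_ba'.
apply: inc_inj; apply: le_mono; apply: homo_ltn incr; exact: lt_trans.
Qed.

End ExchangeRecurrence.

Lemma cluster_vars_of_degree_infinite s pre ks (mk : rat * rat -> shadow) c p k d :
  0 < c -> 0 < p.1 <= p.2 ->
  (forall q, shadow_equiv (shadow_seq ks (mk q)) (mk (exchange_step c q))) ->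
  (forall q, sh_g (mk q) k = d /\ sh_r (mk q) k = q.1) ->
  shadows (mut_seq pre s) (mk p) ->
  exists f : nat -> Kfield, injective f /\ forall m, cluster_var_of_degree s (f m) d.
Proof.
move=> c_gt0 p_ok period mk_k start.
pose mutations m := pre ++ flatten (nseq m ks).
have sh m : shadows (mut_seq (mutations m) s) (mk (iter m (exchange_step c) p)).
  by rewrite mut_seq_cat; apply: shadows_periodic.
exists (fun m => gs_x (mut_seq (mutations m) s) k); split=> [|m].
  pose values m := (iter m (exchange_step c) p).1.
  apply: (specializes_inj (a := fun=> 1) (r := values)) => [m|].
    by have [_ _ /(_ k) [+ _]] := sh m; rewrite (mk_k _).2.
  exact: exchange_iter_inj.
by exists (mutations m), k; have [_ -> _] := sh m; rewrite (mk_k _).1.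
Qed.

Definition Bneg : 'M[int]_3 := mx3 [:: [:: 0; 1; -2]; [:: -1; 0; 1]; [:: 2; -1; 0]].

Definition pos_shadow (p : rat * rat) : shadow := Shadow B0 g0 (vec3 p.1 p.2 1).

Definition neg_shadow (p : rat * rat) : shadow :=
  Shadow Bneg (vec3 (-1) (-2) (-1)) (vec3 p.1 5 p.2).

Ltac case_ord3 := case=> [[|[|[|?]]] ?] //.

Lemma shadows_seed0 : shadows seed0 (pos_shadow (1, 1)).
Proof.
split=> // i; have -> : sh_r (pos_shadow (1, 1)) i = 1 by move: i; case_ord3.
by split; [exact: specializesX | exact: ltr01].
Qed.

Ltac shadow_compute :=
  split=> /=;
  [ apply/matrixP; case_ord3; case_ord3; rewrite !mxE //
  | case_ord3; rewrite /mut_deg /= !big3 !mxE /g0 /vec3 /tnth //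
  | case_ord3; rewrite /mut_values /= !big3 !mxE /vec3 /tnth /= ?divr1; ring ].

Lemma pos_shadow_period p :
  shadow_equiv (shadow_seq [:: i0; i1] (pos_shadow p)) (pos_shadow (exchange_step 1 p)).
Proof. shadow_compute. Qed.

Lemma neg_shadow_period p :
  shadow_equiv (shadow_seq [:: i0; i2] (neg_shadow p)) (neg_shadow (exchange_step 5 p)).
Proof. shadow_compute. Qed.

Lemma shadows_neg_start : shadows (mut_seq [:: i2; i0; i1; i0; i2] seed0) (neg_shadow (3, 7)).
Proof.
have step k s t t' : shadows s t -> shadow_equiv (shadow_mut k t) t' -> shadows (mut_seed k s) t'.
  by move=> st; apply/shadows_equiv/shadows_mut.
(* The recurrence increases only from pairs with a <= b, which (3, 2) is not;
   hence the extra period reaching (3, 7). *)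
rewrite (mut_seq_cat [:: i2; i0; i1]) (_ : (3, 7) = exchange_step 5 (3, 2)) //.
apply: shadows_equiv (shadows_mut_seq _ _) (neg_shadow_period _).
apply: (step i1 _ (Shadow (mx3 [:: [:: 0; -1; -1]; [:: 1; 0; -1]; [:: 1; 1; 0]])
                         (vec3 (-1) 1 (-1)) (vec3 3 1 2))); last by shadow_compute.
apply: (step i0 _ (Shadow (mx3 [:: [:: 0; 1; 1]; [:: -1; 0; -1]; [:: -1; 1; 0]])
                         (vec3 1 1 (-1)) (vec3 1 1 2))); last by shadow_compute.
by apply: (step i2 _ (pos_shadow (1, 1))); [exact: shadows_seed0 | shadow_compute].
Qed.

Theorem mainTheorem5 :
  (exists f : nat -> Kfield,
      injective f /\ forall n, cluster_var_of_degree seed0 (f n) 1) /\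
  (exists f : nat -> Kfield,
      injective f /\ forall n, cluster_var_of_degree seed0 (f n) (-1)).
Proof.
split.
  apply: (@cluster_vars_of_degree_infinite _ [::] _ _ 1 (1, 1) i0) => //.
  - exact: pos_shadow_period.
  - by [].
  - exact: shadows_seed0.
apply: (@cluster_vars_of_degree_infinite _ [:: i2; i0; i1; i0; i2] _ _ 5 (3, 7) i0) => //.
- exact: neg_shadow_period.
- by [].
- exact: shadows_neg_start.
Qed.
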